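(* Let $\Phi:\mathbb R^n\times\mathbb R^m\times\mathbb R^m\to\mathbb R$ and let $\{w^{(j)}\}_{j\ge0}$, $w^{(j)}=(X^{(j)},Y^{(j)},Z^{(j)})$, be a sequence satisfying Assumptions (A1), (A2), (A3). Then for every $\varepsilon>0$ there is a finite index $j_\varepsilon$ and multipliers $(u,v)\in\mathcal M_M(w^{(j_\varepsilon)})$ with $r_{\rm in}(w^{(j_\varepsilon)};u,v)\le\varepsilon$; in particular $r_{\rm in}(w^{(j_\varepsilon)})\le\varepsilon$. Moreover, for every $N\ge0$, \[ \min_{0\le j\le N}r_{\rm in}(w^{(j)})\le\sqrt{\frac{\Phi(w^{(0)})-\inf_{w:(Y,Z)\in\mathcal C}\Phi(w)}{c_X(N+1)}}. \]
   Context: Notation: $w=(X,Y,Z)\in\mathbb R^n\times\mathbb R^m\times\mathbb R^m$; $\mathcal C=\{(Y,Z): Y\ge0,\ Z\ge0,\ Y_iZ_i=0\ \forall i\}$. For $(Y,Z)\in\mathcal C$: $I_{+0}(w)=\{i:Y_i>0,Z_i=0\}$, $I_{0+}(w)=\{i:Y_i=0,Z_i>0\}$, $I_{00}(w)=\{i:Y_i=Z_i=0\}$; $\mathcal Q_M=\mathbb R_{++}^2\cup(\mathbb R\times\{0\})\cup(\{0\}\times\mathbb R)$; $\mathcal M_M(w)$ is the set of $(u,v)\in\mathbb R^m\times\mathbb R^m$ with $u_i=0$ for $i\in I_{+0}(w)$, $v_i=0$ for $i\in I_{0+}(w)$, $(u_i,v_i)\in\mathcal Q_M$ for $i\in I_{00}(w)$.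 $r_{\rm pri}(w)=\max\{\|\min(Y,0)\|_\infty,\|\min(Z,0)\|_\infty,\|Y\circ Z\|_\infty\}$; for $(u,v)\in\mathcal M_M(w)$, $r_{\rm in}(w;u,v)=\max\{\|\nabla_X\Phi(w)\|_\infty,\|\nabla_Y\Phi(w)-u\|_\infty,\|\nabla_Z\Phi(w)-v\|_\infty,r_{\rm pri}(w)\}$, and $r_{\rm in}(w)=\inf_{(u,v)\in\mathcal M_M(w)}r_{\rm in}(w;u,v)$. Assumption (A1): $\Phi$ is continuously differentiable on a neighborhood of the iterates with Lipschitz gradient there; $\{w^{(j)}\}$ is bounded; and $\inf\{\Phi(X,Y,Z):(Y,Z)\in\mathcal C\}>-\infty$. Assumption (A2): there is $c_X>0$ such that for all $j\ge0$, $\Phi(w^{(j+1)})\le\Phi(w^{(j)})-c_X\|\nabla_X\Phi(w^{(j)})\|_\infty^2$. Assumption (A3): for every $j$, $(Y^{(j)},Z^{(j)})\in\arg\min_{(Y,Z)\in\mathcal C}\Phi(X^{(j)},Y,Z)$. (These model the iterates of a two-block coordinate descent: a sufficient-decrease step in $X$ followed by exact minimization over $(Y,Z)\in\mathcal C$.) *)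

From HB Require Import structures.
From mathcomp Require Import all_boot all_order all_algebra.
From mathcomp Require Import all_classical all_reals all_analysis.
Set Implicit Arguments. Unset Strict Implicit. Unset Printing Implicit Defensive.
Import Order.TTheory GRing.Theory Num.Theory.
Import numFieldNormedType.Exports.
Local Open Scope classical_set_scope.
Local Open Scope ring_scope.

Section Defs.
Variables (R : realType) (n m : nat).

(* points w = (X, Y, Z) of R^n x R^m x R^m; X = w.1.1, Y = w.1.2, Z = w.2 *)
Definition pt := ('rV[R]_n * 'rV[R]_m * 'rV[R]_m)%type.

Definition infnorm (k : nat) (x : 'rV[R]_k) : R :=
  \big[Num.max/0]_(i < k) `|x ord0 i|.

Definition eX (k : 'I_n) : pt := (delta_mx ord0 k, 0, 0).
Definition eY (k : 'I_m) : pt := (0, delta_mx ord0 k, 0).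
Definition eZ (k : 'I_m) : pt := (0, 0, delta_mx ord0 k).

Definition gradX (Phi : pt -> R) (w : pt) : 'rV[R]_n := \row_k 'D_(eX k) Phi w.
Definition gradY (Phi : pt -> R) (w : pt) : 'rV[R]_m := \row_k 'D_(eY k) Phi w.
Definition gradZ (Phi : pt -> R) (w : pt) : 'rV[R]_m := \row_k 'D_(eZ k) Phi w.

Definition inC (Y Z : 'rV[R]_m) : Prop :=
  forall i, 0 <= Y ord0 i /\ 0 <= Z ord0 i /\ Y ord0 i * Z ord0 i = 0.

Definition inQM (a b : R) : Prop := (0 < a /\ 0 < b) \/ b = 0 \/ a = 0.

Definition inMM (w : pt) (u v : 'rV[R]_m) : Prop :=
  forall i,
    (0 < w.1.2 ord0 i /\ w.2 ord0 i = 0 -> u ord0 i = 0) /\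
    (w.1.2 ord0 i = 0 /\ 0 < w.2 ord0 i -> v ord0 i = 0) /\
    (w.1.2 ord0 i = 0 /\ w.2 ord0 i = 0 -> inQM (u ord0 i) (v ord0 i)).

Definition r_pri (w : pt) : R :=
  Num.max (infnorm (map_mx (fun x => Num.min x 0) w.1.2))
    (Num.max (infnorm (map_mx (fun x => Num.min x 0) w.2))
             (infnorm (\row_i (w.1.2 ord0 i * w.2 ord0 i)))).

Definition r_in_uv (Phi : pt -> R) (w : pt) (u v : 'rV[R]_m) : R :=
  Num.max (infnorm (gradX Phi w))
    (Num.max (infnorm (gradY Phi w - u))
       (Num.max (infnorm (gradZ Phi w - v)) (r_pri w))).

Definition r_in (Phi : pt -> R) (w : pt) : R :=
  inf [set r_in_uv Phi w uv.1 uv.2 | uv in [set uv | inMM w uv.1 uv.2]].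

Definition Phi_inf (Phi : pt -> R) : R :=
  inf [set Phi w | w in [set w : pt | inC w.1.2 w.2]].

Definition A1 (Phi : pt -> R) (w : nat -> pt) : Prop :=
  (exists U : set pt, open U /\ (forall j, U (w j)) /\
     (forall a, U a -> differentiable Phi a) /\
     (forall a, U a -> {for a, continuous (fun b => (gradX Phi b, gradY Phi b, gradZ Phi b))}) /\
     (exists L : R, forall a b, U a -> U b ->
        Num.max (infnorm (gradX Phi a - gradX Phi b))
          (Num.max (infnorm (gradY Phi a - gradY Phi b))
                   (infnorm (gradZ Phi a - gradZ Phi b))) <= L * `|a - b|)) /\
  (exists M : R, forall j, `|w j| <= M) /\
  (exists lb : R, forall x : pt, inC x.1.2 x.2 -> lb <= Phi x).

Definition A2 (Phi : pt -> R) (w : nat -> pt) (cX : R) : Prop :=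
  forall j, Phi (w j.+1) <= Phi (w j) - cX * (infnorm (gradX Phi (w j))) ^+ 2.

Definition A3 (Phi : pt -> R) (w : nat -> pt) : Prop :=
  forall j, inC (w j).1.2 (w j).2 /\
    forall Y Z, inC Y Z -> Phi (w j) <= Phi ((w j).1.1, Y, Z).

End Defs.

From HB Require Import structures.
From mathcomp Require Import all_boot all_order all_algebra.
From mathcomp Require Import all_classical all_reals all_analysis.
From mathcomp Require Import lra.
Set Implicit Arguments. Unset Strict Implicit. Unset Printing Implicit Defensive.
Import Order.TTheory GRing.Theory Num.Theory.
Import numFieldNormedType.Exports.
Local Open Scope ring_scope.

(* Each iterate minimizes Phi over the complementarity set C in the (Y, Z)
   block, so the one-sided first-order conditions along the coordinate axes
   make (grad_Y Phi, grad_Z Phi) an admissible M-multiplier; with it every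
   component of the residual vanishes except grad_X Phi, hence
   r_in(w_j) <= |grad_X Phi(w_j)|_oo.  Telescoping the sufficient decrease
   (A2) bounds c_X times the sum of the squares of these norms by
   Phi(w_0) - inf_C Phi, so the smallest of the first N+1 of them is at most
   that bound over c_X (N+1). *)

Section DeriveAtHalflineMin.
Variables (R : realType) (V : normedModType R) (f : V -> R) (a : V).

Lemma derive_ge0_right_min (v : V) (d : R) : 0 < d -> derivable f a v ->
  (forall h, 0 < h -> h < d -> f a <= f (h *: v + a)) -> 0 <= 'D_v f a.
Proof.
move=> d0 df hmin.
rewrite /derive cvg_at_rightE; last exact: df.
apply: limr_ge.
  rewrite -(cvg_at_rightE (fun h : R => h^-1 *: ((f \o shift a) (h *: v) - f a))) //.
  apply: cvg_trans df; apply: cvg_app.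
  move=> A [e egt0 Ae]; exists e => // x xe xgt0; apply: Ae => //.
  exact/lt0r_neq0.
near=> h; apply: mulr_ge0.
  by rewrite invr_ge0; apply: ltW; near: h; exists 1 => /=.
rewrite subr_ge0 /=; apply: hmin.
  by near: h; exists 1 => /=.
near: h; exists d => // h /=; rewrite distrC subr0 => hd h0.
by rewrite -(gtr0_norm h0).
Unshelve. all: by end_near. Qed.

Lemma derive_halfline_min (v : V) (y : R) : differentiable f a -> 0 <= y ->
  (forall h, 0 <= h + y -> f a <= f (h *: v + a)) ->
  0 <= 'D_v f a /\ (0 < y -> 'D_v f a = 0).
Proof.
move=> df y0 hmin.
have der w : derivable f a w by exact: diff_derivable.
have Dge0 : 0 <= 'D_v f a.
  apply: (derive_ge0_right_min ltr01 (der v)) => h h0 _.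
  by apply: hmin; lra.
split=> // y_gt0; apply/eqP; rewrite eq_le Dge0 andbT -oppr_ge0.
have -> : - 'D_v f a = 'D_(- v) f a by rewrite !deriveE // linearN.
apply: (derive_ge0_right_min y_gt0 (der _)) => h h0 hy.
by rewrite scalerN -scaleNr; apply: hmin; lra.
Qed.

End DeriveAtHalflineMin.

Lemma scale_delta_add_entry (R : pzRingType) (m : nat) (Y : 'rV[R]_m) k i (h : R) :
  (h *: delta_mx ord0 k + Y) ord0 i = (if k == i then h + Y ord0 i else Y ord0 i).
Proof.
rewrite !mxE eqxx /=; have [_|_] := eqVneq k i; first by rewrite mulr1.
by rewrite mulr0 add0r.
Qed.

Section CoordinateShifts.
Variables (R : realType) (n m : nat).
Implicit Types (a : pt R n m) (Y Z : 'rV[R]_m).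

Lemma scale_eY_add a k (h : R) :
  h *: eY R n k + a = (a.1.1, h *: delta_mx ord0 k + a.1.2, a.2).
Proof.
by case: a => [[X Y] Z]; rewrite /eY; congr (_, _, _) => /=; rewrite ?scaler0 ?add0r.
Qed.

Lemma scale_eZ_add a k (h : R) :
  h *: eZ R n k + a = (a.1.1, a.1.2, h *: delta_mx ord0 k + a.2).
Proof.
by case: a => [[X Y] Z]; rewrite /eZ; congr (_, _, _) => /=; rewrite ?scaler0 ?add0r.
Qed.

Lemma inC_shiftY Y Z k (h : R) :
  inC Y Z -> Z ord0 k = 0 -> 0 <= h + Y ord0 k -> inC (h *: delta_mx ord0 k + Y) Z.
Proof.
move=> YZ Zk hk i; rewrite scale_delta_add_entry; case: eqP => [<-|_]; last exact: YZ.
by rewrite Zk mulr0.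
Qed.

Lemma inC_shiftZ Y Z k (h : R) :
  inC Y Z -> Y ord0 k = 0 -> 0 <= h + Z ord0 k -> inC Y (h *: delta_mx ord0 k + Z).
Proof.
move=> YZ Yk hk i; rewrite scale_delta_add_entry; case: eqP => [<-|_]; last exact: YZ.
by rewrite Yk mul0r.
Qed.

End CoordinateShifts.

Lemma inQM_ge0 (R : realType) (x y : R) : 0 <= x -> 0 <= y -> inQM x y.
Proof.
rewrite /inQM !le_eqVlt => /orP[/eqP<-|x0]; first by right; right.
by case/orP=> [/eqP<-|y0]; [right; left | left].
Qed.

Section ArgminOverC.
Variables (R : realType) (n m : nat) (Phi : pt R n m -> R) (a : pt R n m).
Hypotheses (Phi_diff : differentiable Phi a) (aC : inC a.1.2 a.2)
  (a_min : forall Y Z, inC Y Z -> Phi a <= Phi (a.1.1, Y, Z)).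

Lemma gradY_complementarity i : a.2 ord0 i = 0 ->
  0 <= gradY Phi a ord0 i /\ (0 < a.1.2 ord0 i -> gradY Phi a ord0 i = 0).
Proof.
move=> Zi; rewrite mxE; apply: derive_halfline_min Phi_diff (aC i).1 _ => h hY.
by rewrite scale_eY_add; apply: a_min; exact: inC_shiftY.
Qed.

Lemma gradZ_complementarity i : a.1.2 ord0 i = 0 ->
  0 <= gradZ Phi a ord0 i /\ (0 < a.2 ord0 i -> gradZ Phi a ord0 i = 0).
Proof.
move=> Yi; rewrite mxE; apply: derive_halfline_min Phi_diff (aC i).2.1 _ => h hZ.
by rewrite scale_eZ_add; apply: a_min; exact: inC_shiftZ.
Qed.

Lemma inMM_grad : inMM a (gradY Phi a) (gradZ Phi a).
Proof.
move=> i; split; [|split].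
- by case=> Yi Zi; exact: (gradY_complementarity Zi).2 Yi.
- by case=> Yi Zi; exact: (gradZ_complementarity Yi).2 Zi.
case=> Yi Zi; apply: inQM_ge0.
  exact: (gradY_complementarity Zi).1.
exact: (gradZ_complementarity Yi).1.
Qed.

End ArgminOverC.

Section Residuals.
Variables (R : realType) (n m : nat).

Lemma infnorm_ge0 k (x : 'rV[R]_k) : 0 <= infnorm x.
Proof. exact: bigmax_ge_id. Qed.

Lemma infnorm_eq0 k (x : 'rV[R]_k) : (forall i, x ord0 i = 0) -> infnorm x = 0.
Proof.
move=> x0; apply/eqP; rewrite eq_le infnorm_ge0 andbT.
by apply: bigmax_le => // i _; rewrite x0 normr0.
Qed.

Lemma r_pri_eq0 (w : pt R n m) : inC w.1.2 w.2 -> r_pri w = 0.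
Proof.
move=> wC; rewrite /r_pri !infnorm_eq0 ?maxxx // => i; rewrite mxE.
- by rewrite (wC i).2.2.
- by rewrite min_r //; exact: (wC i).2.1.
- by rewrite min_r //; exact: (wC i).1.
Qed.

Lemma r_in_uv_grad (Phi : pt R n m -> R) (w : pt R n m) : inC w.1.2 w.2 ->
  r_in_uv Phi w (gradY Phi w) (gradZ Phi w) = infnorm (gradX Phi w).
Proof.
move=> wC; rewrite /r_in_uv r_pri_eq0 // !subrr.
rewrite (@infnorm_eq0 _ 0) => [|i]; last by rewrite mxE.
by rewrite !maxxx max_l // infnorm_ge0.
Qed.

Lemma r_in_le_uv (Phi : pt R n m -> R) (w : pt R n m) (u v : 'rV[R]_m) :
  inMM w u v -> r_in Phi w <= r_in_uv Phi w u v.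
Proof.
move=> wuv; apply: ge_inf; last by exists (u, v).
by exists 0 => _ [uv _ <-]; rewrite le_max infnorm_ge0.
Qed.

End Residuals.

Lemma Phi_inf_le (R : realType) (n m : nat) (Phi : pt R n m -> R) (lb : R) (x : pt R n m) :
  (forall y : pt R n m, inC y.1.2 y.2 -> lb <= Phi y) -> inC x.1.2 x.2 ->
  Phi_inf Phi <= Phi x.
Proof.
move=> Phi_ge xC; apply: ge_inf; last by exists x.
by exists lb => _ [y yC <-]; exact: Phi_ge.
Qed.

Section SufficientDecrease.
Variables (R : archiRealFieldType) (phi g : nat -> R) (c lb : R).
Hypotheses (c_gt0 : 0 < c) (phi_decrease : forall j, phi j.+1 <= phi j - c * g j ^+ 2)
  (phi_ge : forall j, lb <= phi j).

Lemma sum_decrease_le N : \sum_(j < N) c * g j ^+ 2 <= phi 0%N - phi N.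
Proof.
elim: N => [|N IH]; first by rewrite big_ord0 subrr.
by rewrite big_ord_recr /=; have := phi_decrease N; lra.
Qed.

Lemma exists_sq_le_gap N :
  exists2 j, (j <= N)%N & g j ^+ 2 <= (phi 0%N - lb) / (c * N.+1%:R).
Proof.
case: (@arg_minP _ _ _ (ord0 : 'I_N.+1) predT (fun j : 'I_N.+1 => g j ^+ 2)) => // j _ j_min.
exists j; first by rewrite -ltnS.
have cN : 0 < c * N.+1%:R by rewrite mulr_gt0 ?ltr0n.
rewrite ler_pdivlMr //.
have -> : g j ^+ 2 * (c * N.+1%:R) = \sum_(k < N.+1) c * g j ^+ 2.
  by rewrite sumr_const card_ord -[in RHS]mulr_natr mulrA [g j ^+ 2 * c]mulrC.
suff : \sum_(k < N.+1) c * g j ^+ 2 <= \sum_(k < N.+1) c * g k ^+ 2.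
  by have := sum_decrease_le N.+1; have := phi_ge N.+1; lra.
by apply: ler_sum => k _; rewrite ler_wpM2l ?(ltW c_gt0) //; exact: j_min.
Qed.

Lemma exists_sq_le e : 0 < e -> exists j, g j ^+ 2 <= e.
Proof.
move=> e_gt0; have ce : 0 < c * e by rewrite mulr_gt0.
set K := Num.Def.archi_bound ((phi 0%N - lb) / (c * e)).
have gap_lt : phi 0%N - lb < K%:R * (c * e).
  by rewrite -ltr_pdivrMr // archi_boundP // divr_ge0 ?subr_ge0 // ltW.
have [j _ gj] := exists_sq_le_gap K.
exists j; apply: le_trans gj _.
rewrite ler_pdivrMr ?mulr_gt0 ?ltr0n // -addn1 natrD.
move: gap_lt; set k := K%:R; nra.
Qed.

End SufficientDecrease.

Lemma le_sqrt_of_sq_le (R : rcfType) (x y : R) : 0 <= x -> x ^+ 2 <= y -> x <= Num.sqrt y.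
Proof. by move=> x0 xy; rewrite -[x]ger0_norm // -sqrtr_sqr ler_wsqrtr. Qed.

Theorem theorem2 (R : realType) (n m : nat) (Phi : pt R n m -> R)
    (w : nat -> pt R n m) (cX : R) :
  0 < cX -> A1 Phi w -> A2 Phi w cX -> A3 Phi w ->
  (forall eps : R, 0 < eps ->
     exists j : nat, exists u v : 'rV[R]_m,
       inMM (w j) u v /\ r_in_uv Phi (w j) u v <= eps /\ r_in Phi (w j) <= eps) /\
  (forall N : nat,
     \big[Num.min/r_in Phi (w 0%N)]_(j < N.+1) r_in Phi (w j)
       <= Num.sqrt ((Phi (w 0%N) - Phi_inf Phi) / (cX * N.+1%:R))).
Proof.
move=> cX_gt0 [[U [_ [Uw [U_diff _]]]] [_ [lb Phi_ge]]] A2w A3w.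
pose g j := infnorm (gradX Phi (w j)).
have g_ge0 j : 0 <= g j by exact: infnorm_ge0.
have wC j : inC (w j).1.2 (w j).2 := (A3w j).1.
have multipliers j : inMM (w j) (gradY Phi (w j)) (gradZ Phi (w j)).
  exact: inMM_grad (U_diff _ (Uw j)) (wC j) (A3w j).2.
have r_in_le_g j : r_in Phi (w j) <= g j.
  by rewrite /g -(r_in_uv_grad Phi (wC j)); exact: r_in_le_uv.
have Phi_ge_inf j : Phi_inf Phi <= Phi (w j) := Phi_inf_le Phi_ge (wC j).
split=> [eps eps_gt0 | N].
- have [j gj] := exists_sq_le (phi := fun j => Phi (w j)) cX_gt0 A2w Phi_ge_inf
    (exprn_gt0 2 eps_gt0).
  have gj_le : g j <= eps.
    by have := le_sqrt_of_sq_le (g_ge0 j) gj; rewrite sqrtr_sqr gtr0_norm.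
  exists j, (gradY Phi (w j)), (gradZ Phi (w j)).
  by rewrite r_in_uv_grad //; split=> //; split=> //; exact: le_trans (r_in_le_g j) _.
have [j jN gj] := exists_sq_le_gap (phi := fun j => Phi (w j)) cX_gt0 A2w Phi_ge_inf N.
apply: le_trans (bigmin_le _ (Ordinal (jN : (j < N.+1)%N)) _) _.
exact: le_trans (r_in_le_g j) (le_sqrt_of_sq_le (g_ge0 j) gj).
Qed.
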